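(* Let $\alpha:U\to V$ be a surjective h-transmission between commutative supertropical monoids, and assume that $U$ is a semiring. Then $V$ is a semiring.
   Context: All monoids are commutative. A supertropical monoid is a monoid $(U,\cdot)$ with absorbing element $0$ and distinguished idempotent $e$ with $ex=0\Rightarrow x=0$, together with a total ordering on $eU$, compatible with multiplication and with $0$ least, making $eU$ a bipotent semiring (addition $=\max$). Define $x+y:=y$ if $ex<ey$, $x$ if $ex>ey$, $ex$ if $ex=ey$; $U$ is a semiring if this addition is associative and distributive. A transmission $\alpha:U\to V$ is a map with $\alpha(0)=0$, $\alpha(1)=1$, multiplicative, $\alpha(e_U)=e_V$, order-preserving on $eU$. An h-transmission is a transmission such that for all $x,y\in U$: if $ex<ey$ and $\alpha(ex)=\alpha(ey)$, then $\alpha(y)\in eV$. *)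

From Stdlib Require Import ClassicalEpsilon.

Set Implicit Arguments.

Record stmonoid := STMonoid {
  carrier :> Type;
  mul : carrier -> carrier -> carrier;
  one : carrier;
  zero : carrier;
  ee : carrier;
  le : carrier -> carrier -> Prop;
  mulA : forall x y z, mul x (mul y z) = mul (mul x y) z;
  mulC : forall x y, mul x y = mul y x;
  mul1 : forall x, mul one x = x;
  mul0 : forall x, mul zero x = zero;
  ee_idem : mul ee ee = ee;
  ee_faithful : forall x, mul ee x = zero -> x = zero;
  le_refl : forall a, (exists u, a = mul ee u) -> le a a;
  le_trans : forall a b c, (exists u, a = mul ee u) -> (exists u, b = mul ee u) ->
     (exists u, c = mul ee u) -> le a b -> le b c -> le a c;
  le_antisym : forall a b, (exists u, a = mul ee u) -> (exists u, b = mul ee u) ->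
     le a b -> le b a -> a = b;
  le_total : forall a b, (exists u, a = mul ee u) -> (exists u, b = mul ee u) ->
     le a b \/ le b a;
  le_mul : forall a b c, (exists u, a = mul ee u) -> (exists u, b = mul ee u) ->
     (exists u, c = mul ee u) -> le a b -> le (mul a c) (mul b c);
  le0 : forall a, (exists u, a = mul ee u) -> le zero a
}.

Arguments mul {s} _ _.
Arguments le {s} _ _.


Section Ops.
Variable U : stmonoid.

Definition in_eU (x : U) : Prop := exists u, x = mul (ee U) u.

Definition lt (a b : U) : Prop := le a b /\ a <> b.

Definition add (x y : U) : U :=
  if excluded_middle_informative (lt (mul (ee U) x) (mul (ee U) y)) then y
  else if excluded_middle_informative (lt (mul (ee U) y) (mul (ee U) x)) then x
  else mul (ee U) x.

Definition is_semiring : Prop :=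
  (forall x y z : U, add x (add y z) = add (add x y) z) /\
  (forall x y z : U, mul x (add y z) = add (mul x y) (mul x z)).
End Ops.
Arguments in_eU {U} _.
Arguments lt {U} _ _.
Arguments add {U} _ _.

Definition is_transmission (U V : stmonoid) (f : U -> V) : Prop :=
  f (zero U) = zero V /\ f (one U) = one V /\
  (forall x y, f (mul x y) = mul (f x) (f y)) /\
  f (ee U) = ee V /\
  (forall a b : U, in_eU a -> in_eU b -> le a b -> le (f a) (f b)).

Definition is_h_transmission (U V : stmonoid) (f : U -> V) : Prop :=
  is_transmission U V f /\
  (forall x y : U, lt (mul (ee U) x) (mul (ee U) y) ->
     f (mul (ee U) x) = f (mul (ee U) y) -> in_eU (f y)).

(* A surjective transmission already preserves multiplication, so the semiring
   laws of V follow from those of U once alpha also preserves the supertropical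
   addition.  Comparing x + y with alpha x + alpha y, the only delicate case is
   ex < ey with alpha(ex) = alpha(ey): then x + y = y while alpha x + alpha y is
   the ghost e(alpha y), and these agree precisely because the h-condition makes
   alpha y a ghost. *)
From Stdlib Require Import ClassicalEpsilon Classical.

Section SupertropicalAddition.
Context {W : stmonoid}.

Lemma ee_mul_in_eU (x : W) : in_eU (mul (ee W) x).
Proof. exists x; reflexivity. Qed.

Lemma ee_mul_ghost (v : W) : in_eU v -> mul (ee W) v = v.
Proof. intros [w ->]. rewrite mulA, ee_idem. reflexivity. Qed.

Lemma lt_asym {a b : W} : in_eU a -> in_eU b -> lt a b -> ~ lt b a.
Proof.
  intros Ha Hb [Lab Nab] [Lba _]. apply Nab. apply (le_antisym W); assumption.
Qed.

Lemma lt_total {a b : W} : in_eU a -> in_eU b -> lt a b \/ lt b a \/ a = b.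
Proof.
  intros Ha Hb.
  destruct (classic (a = b)) as [Eab | Nab]; [right; right; exact Eab|].
  destruct (le_total W Ha Hb) as [L | L].
  - left; split; assumption.
  - right; left; split; [assumption | congruence].
Qed.

Lemma add_lt {x y : W} : lt (mul (ee W) x) (mul (ee W) y) -> add x y = y.
Proof.
  intro H. unfold add.
  destruct (excluded_middle_informative _); [reflexivity | contradiction].
Qed.

Lemma add_gt {x y : W} : lt (mul (ee W) y) (mul (ee W) x) -> add x y = x.
Proof.
  intro H. unfold add.
  destruct (excluded_middle_informative _) as [H' | _].
  - exfalso. exact (lt_asym (ee_mul_in_eU y) (ee_mul_in_eU x) H H').
  - destruct (excluded_middle_informative _); [reflexivity | contradiction].
Qed.

Lemma add_eq {x y : W} : mul (ee W) x = mul (ee W) y -> add x y = mul (ee W) x.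
Proof.
  intro H. unfold add. rewrite H.
  destruct (excluded_middle_informative (lt (mul (ee W) y) (mul (ee W) y)))
    as [[_ N] | _]; [congruence | reflexivity].
Qed.

Lemma addC (x y : W) : add x y = add y x.
Proof.
  destruct (lt_total (ee_mul_in_eU x) (ee_mul_in_eU y)) as [L | [L | E]].
  - rewrite (add_lt L), (add_gt L). reflexivity.
  - rewrite (add_lt L), (add_gt L). reflexivity.
  - rewrite (add_eq E), add_eq; congruence.
Qed.

End SupertropicalAddition.

Section HTransmission.
Context {U V : stmonoid} {f : U -> V}.
Hypothesis f_h : is_h_transmission U V f.

Lemma h_transmission_mul (x y : U) : f (mul x y) = mul (f x) (f y).
Proof. destruct f_h as [[_ [_ [Hm _]]] _]. apply Hm. Qed.

Lemma h_transmission_ee_mul (x : U) : f (mul (ee U) x) = mul (ee V) (f x).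
Proof.
  destruct f_h as [[_ [_ [_ [He _]]]] _].
  rewrite h_transmission_mul, He. reflexivity.
Qed.

Lemma h_transmission_lt {x y : U} :
  lt (mul (ee U) x) (mul (ee U) y) ->
  f (mul (ee U) x) = f (mul (ee U) y) \/ lt (mul (ee V) (f x)) (mul (ee V) (f y)).
Proof.
  destruct f_h as [[_ [_ [_ [_ Hle]]]] _].
  intros [L _]. rewrite <- !h_transmission_ee_mul.
  destruct (classic (f (mul (ee U) x) = f (mul (ee U) y))) as [E | N].
  - left; exact E.
  - right; split; [apply Hle; auto using ee_mul_in_eU | exact N].
Qed.

Lemma h_transmission_add_lt {x y : U} :
  lt (mul (ee U) x) (mul (ee U) y) -> f (add x y) = add (f x) (f y).
Proof.
  intro L. rewrite (add_lt L).
  destruct (h_transmission_lt L) as [E | L'].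
  - destruct f_h as [_ Hh].
    rewrite add_eq by (rewrite <- !h_transmission_ee_mul; exact E).
    rewrite <- h_transmission_ee_mul, E, h_transmission_ee_mul.
    symmetry. apply ee_mul_ghost. exact (Hh x y L E).
  - rewrite (add_lt L'). reflexivity.
Qed.

Lemma h_transmission_add (x y : U) : f (add x y) = add (f x) (f y).
Proof.
  destruct (lt_total (ee_mul_in_eU x) (ee_mul_in_eU y)) as [L | [L | E]].
  - exact (h_transmission_add_lt L).
  - rewrite addC, (h_transmission_add_lt L), addC. reflexivity.
  - rewrite (add_eq E), add_eq; rewrite <- !h_transmission_ee_mul; congruence.
Qed.

End HTransmission.

Lemma is_semiring_surjective_image (U V : stmonoid) (f : U -> V) :
  (forall x y, f (add x y) = add (f x) (f y)) ->
  (forall x y, f (mul x y) = mul (f x) (f y)) ->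
  (forall v : V, exists u : U, f u = v) ->
  is_semiring U -> is_semiring V.
Proof.
  intros Hadd Hmul Hsurj [HA HD].
  split; intros x y z;
    destruct (Hsurj x) as [a <-], (Hsurj y) as [b <-], (Hsurj z) as [c <-].
  - rewrite <- !Hadd, HA. reflexivity.
  - rewrite <- Hadd, <- !Hmul, <- Hadd, HD. reflexivity.
Qed.

Theorem theorem5p7 (U V : stmonoid) (alpha : U -> V) :
  is_h_transmission U V alpha ->
  (forall v : V, exists u : U, alpha u = v) ->
  is_semiring U ->
  is_semiring V.
Proof.
  intros Hh Hsurj.
  apply is_semiring_surjective_image with alpha; [| | exact Hsurj].
  - exact (h_transmission_add Hh).
  - exact (h_transmission_mul Hh).
Qed.
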